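(* Let $\oplus$ be a basic combinator whose domain is the set of all pairs of tpos over $W$. Then $\oplus$ satisfies both ($\oplus$SPU+) for all $x,y,z \in W$: if $x \prec_1 y$ and $z \prec_2 y$ then $x \prec_{1\oplus 2} y$ or $z \prec_{1\oplus 2} y$, and ($\oplus$PAR) for all $x,y \in W$: if $x \prec_{1\oplus 2} y$ then for each $i \in \{1,2\}$ there exists $z \in W$ with $x \sim_{1\oplus 2} z$ and $z \prec_i y$, (for all pairs $\langle\preceq_1,\preceq_2\rangle$) if and only if $\oplus = \oplus_{\mathrm{STQ}}$.
   Context: $W$ is a finite nonempty set (of possible worlds). A tpo is a total preorder on $W$; $\prec$, $\sim$ its strict and symmetric parts. For $S \subseteq W$, $\min(\preceq, S) = \{x \in S : x \preceq y\ \forall y \in S\}$. A combinator $\oplus$ maps pairs of tpos $\langle\preceq_1,\preceq_2\rangle$ to a tpo $\preceq_{1\oplus 2}$; it is basic if $\min(\preceq_{1\oplus 2}, W) = \min(\preceq_1, W) \cup \min(\preceq_2, W)$ for all pairs. The Synchronous TeamQueue combinator $\oplus_{\mathrm{STQ}}$ maps $\langle\preceq_1,\preceq_2\rangle$ to the tpo whose ordered partition into ranks (most plausible first) is $\langle T_1,\ldots,T_m\rangle$, where $T_i = \min(\preceq_1, R_i) \cup \min(\preceq_2, R_i)$ with $R_i = \bigcap_{k<i} T_k^c$ ($T^c$ the complement in $W$), and $m$ is minimal with $\bigcup_{i\le m} T_i = W$. *)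

From mathcomp Require Import all_boot.
Set Implicit Arguments. Unset Strict Implicit. Unset Printing Implicit Defensive.

Section Tpo.
Variable W : finType.

Definition total_preorder (le : rel W) : Prop :=
  (forall x y, le x y || le y x) /\ (forall x y z, le x y -> le y z -> le x z).

Definition strict (le : rel W) : rel W := fun x y => le x y && ~~ le y x.
Definition symm (le : rel W) : rel W := fun x y => le x y && le y x.

Definition minset (le : rel W) (S : {set W}) : {set W} :=
  [set x in S | [forall y in S, le x y]].

Definition combinator := rel W -> rel W -> rel W.

Definition is_combinator (c : combinator) : Prop :=
  forall le1 le2, total_preorder le1 -> total_preorder le2 ->
    total_preorder (c le1 le2).

Definition basic (c : combinator) : Prop :=
  forall le1 le2, total_preorder le1 -> total_preorder le2 ->
    minset (c le1 le2) setT = minset le1 setT :|: minset le2 setT.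

(* Synchronous TeamQueue.  stq_R le1 le2 n is R_{n+1} (the worlds not yet
   placed in T_1..T_n), and stq_T le1 le2 n is T_{n+1}. *)
Fixpoint stq_R (le1 le2 : rel W) (n : nat) : {set W} :=
  match n with
  | 0 => setT
  | n'.+1 => stq_R le1 le2 n' :\: (minset le1 (stq_R le1 le2 n')
                                   :|: minset le2 (stq_R le1 le2 n'))
  end.

Definition stq_T (le1 le2 : rel W) (n : nat) : {set W} :=
  minset le1 (stq_R le1 le2 n) :|: minset le2 (stq_R le1 le2 n).

(* x ⪯_STQ y iff rank(x) <= rank(y), i.e. iff every R_n containing x also
   contains y.  (For tpos, R_n = ∅ for n >= #|W|, so indices up to #|W|
   suffice.) *)
Definition stq : combinator := fun le1 le2 x y =>
  [forall n : 'I_#|W|.+1, (x \in stq_R le1 le2 n) ==> (y \in stq_R le1 le2 n)].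

Definition SPUplus (c : combinator) (le1 le2 : rel W) : Prop :=
  forall x y z, strict le1 x y -> strict le2 z y ->
    strict (c le1 le2) x y \/ strict (c le1 le2) z y.

Definition PAR (c : combinator) (le1 le2 : rel W) : Prop :=
  forall x y, strict (c le1 le2) x y ->
    (exists z, symm (c le1 le2) x z /\ strict le1 z y) /\
    (exists z, symm (c le1 le2) x z /\ strict le2 z y).

End Tpo.

From Pilot Require Import Defs.
From mathcomp Require Import all_boot zify.
Set Implicit Arguments. Unset Strict Implicit. Unset Printing Implicit Defensive.

(* Under STQ a world has a rank, the round k at which it becomes a minimum of
   ⪯_1 or ⪯_2 among the worlds not placed before, and x ⪯ y iff rank x <= rank y;
   SPU+ and PAR are read off this description.  Conversely, if a combinator
   satisfies SPU+ and PAR, strong induction on k shows that the worlds of round k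
   are pairwise equivalent and strictly below every later world.  Equivalence:
   a world strictly below a round-k minimum x of ⪯_i has, by PAR, an equivalent
   witness strictly ⪯_i-below x; by minimality of x the witness belongs to an
   earlier round, hence lies strictly below everything of round k.  Strictness:
   the two minima of the remaining worlds are strictly below any later y for ⪯_1
   and ⪯_2 respectively, so SPU+ puts one of them, hence all of round k,
   strictly below y. *)

(* finset exports an unrelated [minset]. *)
Local Notation minset := Defs.minset.

Section TotalPreorder.
Variables (W : finType) (le : rel W).
Hypothesis tpo : total_preorder le.
Implicit Types (S : {set W}) (x y z m : W).

Lemma tpo_total : total le.
Proof. by case: tpo. Qed.

Lemma tpo_trans : transitive le.
Proof. by case: tpo => _ tr y x z; apply: tr. Qed.

Lemma tpo_refl : reflexive le.
Proof. by move=> x; have := tpo_total x x; rewrite orbb. Qed.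

Lemma le_strict_trans x y z : le x y -> strict le y z -> strict le x z.
Proof.
move=> le_xy /andP [le_yz nle_zy]; rewrite /strict (tpo_trans le_xy le_yz).
by apply: contra nle_zy => le_zx; apply: tpo_trans le_zx le_xy.
Qed.

Lemma minset_le S m y : m \in minset le S -> y \in S -> le m y.
Proof. by rewrite inE => /andP [_ /forall_inP]; apply. Qed.

Lemma minset_nonempty S x : x \in S -> exists m, m \in minset le S.
Proof.
move=> xS; case: (extremumP id tpo_refl tpo_trans tpo_total xS) => m mS m_min.
by exists m; rewrite inE [m \in S]mS; apply/forall_inP => y /m_min.
Qed.

Lemma minset_strict S m y :
  m \in minset le S -> y \in S -> y \notin minset le S -> strict le m y.
Proof.
move=> mM yS; rewrite inE yS /= => /forall_inPn [z zS nle_yz].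
rewrite /strict (minset_le mM yS); apply: contra nle_yz => le_ym.
exact: tpo_trans le_ym (minset_le mM zS).
Qed.

Lemma minset_not_strict S x y : x \in minset le S -> y \in S -> ~~ strict le y x.
Proof. by move=> xM yS; rewrite /strict (minset_le xM yS) andbF. Qed.

End TotalPreorder.

Section Rounds.
Variables (W : finType) (le1 le2 : rel W).
Hypotheses (tpo1 : total_preorder le1) (tpo2 : total_preorder le2).

Local Notation R := (stq_R le1 le2).
Local Notation T := (stq_T le1 le2).

Lemma stq_T_subset n : T n \subset R n.
Proof. by apply/subsetP => x; rewrite !inE => /orP [] /andP []. Qed.

Lemma mem_stq_T x n : (x \in T n) = (x \in R n) && (x \notin R n.+1).
Proof.
rewrite [x \in R n.+1]/= in_setD -[_ :|: _]/(T n).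
case xT: (x \in T n); rewrite /= ?andbN //.
by rewrite (subsetP (stq_T_subset n) _ xT).
Qed.

Lemma stq_R_subset n m : n <= m -> R m \subset R n.
Proof.
move=> /subnK <-; elim: (m - n) => [|k IH]; first exact: subxx.
by apply: subset_trans IH; apply: subsetDl.
Qed.

Lemma stq_R_proper n : R n != set0 -> R n.+1 \proper R n.
Proof.
case/set0Pn=> x xR; have [m mM] := minset_nonempty tpo1 xR.
apply/properP; split; first exact/stq_R_subset/leqnSn.
exists m; first by move: mM; rewrite inE => /andP [].
have: m \in T n by rewrite inE mM.
by rewrite mem_stq_T => /andP [].
Qed.

Lemma card_stq_R n : #|R n| <= #|W| - n.
Proof.
elim: n => [|n IH]; first by rewrite subn0 max_card.
have [R0|/stq_R_proper/proper_card] := eqVneq (R n) set0.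
  by rewrite /= R0 set0D cards0.
by move: IH; lia.
Qed.

Lemma stq_R_exhausted : R #|W| = set0.
Proof. by apply: cards0_eq; apply/eqP; rewrite -leqn0 -(subnn #|W|) card_stq_R. Qed.

Lemma exists_stq_T x : exists k, x \in T k.
Proof.
have ex : exists n, x \notin R n by exists #|W|; rewrite stq_R_exhausted inE.
case: (ex_minnP ex) => [[|k]]; first by rewrite inE.
move=> xNR k_min; exists k; rewrite mem_stq_T xNR andbT.
by apply/negPn/negP => /k_min; rewrite ltnn.
Qed.

Lemma mem_stq_R x k n : x \in T k -> (x \in R n) = (n <= k).
Proof.
rewrite mem_stq_T => /andP [xRk xNRk1]; case: (leqP n k) => nk.
  exact: (subsetP (stq_R_subset nk)).
by apply: contraNF xNRk1 => /(subsetP (stq_R_subset nk)).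
Qed.

Lemma stq_T_lt_card x k : x \in T k -> k < #|W|.
Proof.
move=> xT; rewrite ltnNge; apply/negP => le_Wk.
by have := mem_stq_R #|W| xT; rewrite le_Wk stq_R_exhausted inE.
Qed.

Lemma stq_le x y i j : x \in T i -> y \in T j -> stq le1 le2 x y = (i <= j).
Proof.
move=> xT yT; apply/forallP/idP => [/(_ (Ordinal (leqW (stq_T_lt_card xT))))|].
  by rewrite /= (mem_stq_R _ xT) (mem_stq_R _ yT) leqnn.
move=> ij n; rewrite (mem_stq_R _ xT) (mem_stq_R _ yT).
by apply/implyP => /leq_trans; apply.
Qed.

Lemma stq_lt x y i j : x \in T i -> y \in T j -> strict (stq le1 le2) x y = (i < j).
Proof.
move=> xT yT; rewrite /strict (stq_le xT yT) (stq_le yT xT) -ltnNge.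
by rewrite andbC ltn_neqAle; case: ltngtP.
Qed.

Lemma stq_eqv x y i j : x \in T i -> y \in T j -> symm (stq le1 le2) x y = (i == j).
Proof. by move=> xT yT; rewrite /symm (stq_le xT yT) (stq_le yT xT) eqn_leq. Qed.

Lemma stq_R_succP y n :
  y \in R n.+1 ->
  [/\ y \in R n, y \notin minset le1 (R n) & y \notin minset le2 (R n)].
Proof. by rewrite /= in_setD in_setU negb_or => /andP [/andP [? ?] ?]. Qed.

Lemma stq_SPUplus : SPUplus (@stq W) le1 le2.
Proof.
move=> x y z lt1_xy lt2_zy.
have [i xT] := exists_stq_T x; have [j yT] := exists_stq_T y.
have [k zT] := exists_stq_T z.
rewrite (stq_lt xT yT) (stq_lt zT yT).
case: (ltnP i j) => [|ji]; first by left.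
case: (ltnP k j) => [|jk]; first by right.
have xR : x \in R j by rewrite (mem_stq_R _ xT).
have zR : z \in R j by rewrite (mem_stq_R _ zT).
move: yT; rewrite inE => /orP [] yM.
- by rewrite (negbTE (minset_not_strict yM xR)) in lt1_xy.
- by rewrite (negbTE (minset_not_strict yM zR)) in lt2_zy.
Qed.

Lemma stq_PAR : PAR (@stq W) le1 le2.
Proof.
move=> x y; have [i xT] := exists_stq_T x; have [j yT] := exists_stq_T y.
rewrite (stq_lt xT yT) => ij.
have xR : x \in R i by rewrite (mem_stq_R _ xT).
have /stq_R_succP [yR yN1 yN2] : y \in R i.+1 by rewrite (mem_stq_R _ yT).
have eqv_x m : m \in T i -> symm (stq le1 le2) x m by move=> mT; rewrite (stq_eqv xT mT).
have [m1 m1M] := minset_nonempty tpo1 xR; have [m2 m2M] := minset_nonempty tpo2 xR.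
split; [exists m1 | exists m2]; split.
- by apply: eqv_x; rewrite inE m1M.
- exact: (minset_strict tpo1 m1M yR yN1).
- by apply: eqv_x; rewrite inE m2M orbT.
- exact: (minset_strict tpo2 m2M yR yN2).
Qed.

End Rounds.

Section Characterization.
Variables (W : finType) (c : combinator W) (le1 le2 : rel W).
Hypotheses (tpo1 : total_preorder le1) (tpo2 : total_preorder le2).
Hypothesis tpoC : total_preorder (c le1 le2).
Hypotheses (spu : SPUplus c le1 le2) (par : PAR c le1 le2).

Local Notation C := (c le1 le2).
Local Notation R := (stq_R le1 le2).
Local Notation T := (stq_T le1 le2).

Lemma PAR_round_eqv k :
  (forall j, j < k -> forall w y, w \in T j -> y \in R j.+1 -> strict C w y) ->
  forall x z, x \in T k -> z \in T k -> C x z.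
Proof.
move=> below x z xT zT; case/orP: (tpo_total tpoC x z) => // Czx.
apply: contraT => nCxz; have lt_zx : strict C z x by rewrite /strict Czx nCxz.
suff no_witness le w : x \in minset le (R k) -> symm C z w -> strict le w x -> False.
  have [[w1 [zw1 w1x]] [w2 [zw2 w2x]]] := par lt_zx.
  move: xT; rewrite inE => /orP [] xM.
  - by case: (no_witness _ _ xM zw1 w1x).
  - by case: (no_witness _ _ xM zw2 w2x).
move=> xM /andP [Czw _] lt_wx; have [j wT] := exists_stq_T le2 tpo1 w.
case: (ltnP j k) => [jk | kj].
- have zR : z \in R j.+1 by rewrite (mem_stq_R _ zT).
  by case/andP: (below j jk w z wT zR) => _; rewrite Czw.
- have wR : w \in R k by rewrite (mem_stq_R _ wT).
  by rewrite (negbTE (minset_not_strict xM wR)) in lt_wx.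
Qed.

Lemma SPUplus_round_lt k :
  (forall x z, x \in T k -> z \in T k -> C x z) ->
  forall x y, x \in T k -> y \in R k.+1 -> strict C x y.
Proof.
move=> eqv x y xT /stq_R_succP [yR yN1 yN2].
have [m1 m1M] := minset_nonempty tpo1 yR; have [m2 m2M] := minset_nonempty tpo2 yR.
have m1T : m1 \in T k by rewrite inE m1M.
have m2T : m2 \in T k by rewrite inE m2M orbT.
case: (spu (minset_strict tpo1 m1M yR yN1) (minset_strict tpo2 m2M yR yN2)).
- exact: (le_strict_trans tpoC (eqv _ _ xT m1T)).
- exact: (le_strict_trans tpoC (eqv _ _ xT m2T)).
Qed.

Lemma SPUplus_PAR_rounds k :
  (forall x z, x \in T k -> z \in T k -> C x z) /\
  (forall x y, x \in T k -> y \in R k.+1 -> strict C x y).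
Proof.
elim/ltn_ind: k => k IH.
have eqv := PAR_round_eqv (fun j jk => (IH j jk).2).
by split=> //; apply: SPUplus_round_lt.
Qed.

Lemma SPUplus_PAR_eq_stq : C =2 stq le1 le2.
Proof.
move=> x y; have [i xT] := exists_stq_T le2 tpo1 x.
have [j yT] := exists_stq_T le2 tpo1 y.
rewrite (stq_le tpo1 xT yT); case: ltngtP => [ij | ji | eq_ij].
- have yR : y \in R i.+1 by rewrite (mem_stq_R _ yT).
  by case/andP: ((SPUplus_PAR_rounds i).2 x y xT yR).
- have xR : x \in R j.+1 by rewrite (mem_stq_R _ xT).
  by case/andP: ((SPUplus_PAR_rounds j).2 y x yT xR) => _ /negbTE.
- by rewrite eq_ij in xT; apply: (SPUplus_PAR_rounds j).1.
Qed.

End Characterization.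

Section Extensionality.
Variables (W : finType) (c d : combinator W) (le1 le2 : rel W).
Hypothesis eq_cd : c le1 le2 =2 d le1 le2.

Lemma eq_strict (le le' : rel W) : le =2 le' -> strict le =2 strict le'.
Proof. by move=> eq_le x y; rewrite /strict !eq_le. Qed.

Lemma eq_symm (le le' : rel W) : le =2 le' -> symm le =2 symm le'.
Proof. by move=> eq_le x y; rewrite /symm !eq_le. Qed.

Lemma eq_SPUplus : SPUplus d le1 le2 -> SPUplus c le1 le2.
Proof. by move=> spu x y z lt1 lt2; rewrite !(eq_strict eq_cd); apply: spu. Qed.

Lemma eq_PAR : PAR d le1 le2 -> PAR c le1 le2.
Proof.
move=> par x y; rewrite (eq_strict eq_cd) => /par [[z1 [e1 l1]] [z2 [e2 l2]]].
by split; [exists z1 | exists z2]; rewrite (eq_symm eq_cd).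
Qed.

End Extensionality.

Theorem theorem2 (W : finType) (HW : 0 < #|W|) (c : combinator W) :
  is_combinator c -> basic c ->
  ((forall le1 le2 : rel W, total_preorder le1 -> total_preorder le2 ->
      SPUplus c le1 le2 /\ PAR c le1 le2)
   <->
   (forall le1 le2 : rel W, total_preorder le1 -> total_preorder le2 ->
      c le1 le2 =2 stq le1 le2)).
Proof.
move=> combC _; split=> [axioms | eq_stq] le1 le2 tpo1 tpo2.
- have [spu par] := axioms le1 le2 tpo1 tpo2.
  exact: SPUplus_PAR_eq_stq tpo1 tpo2 (combC le1 le2 tpo1 tpo2) spu par.
- have eq_cs := eq_stq le1 le2 tpo1 tpo2.
  split; first exact: eq_SPUplus eq_cs (stq_SPUplus tpo1).
  exact: eq_PAR eq_cs (stq_PAR tpo1 tpo2).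
Qed.
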